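(* Under the Setting below, let $\{x^k\}_{k\ge0}$ and $\{y^k\}_{k\ge1}$ be generated by Algorithm 1 with extrapolation weights satisfying $0\le\omega_k\le\omega<1$. Then: (1) $\{H(x^k)\}_{k\ge0}$ is non-increasing; (2) $\sum_{k=1}^\infty\|x^k-y^k\|^2<\infty$, in particular $\|x^k-y^k\|\to0$; (3) the index set $I(x^k)$ changes only finitely often, i.e. there is $k_0$ with $I(x^k)=I(x^{k_0})$ for all $k\ge k_0$; (4) $\sum_{k=1}^\infty\|x^k-x^{k-1}\|^2<\infty$, in particular $\|x^k-x^{k-1}\|\to0$.
   Context: Setting. Let $\lambda>0$, $l,u\in\mathbb{R}^n$ with $l\le u$ componentwise, $X=\{x\in\mathbb{R}^n: l\le x\le u\}$, and $\delta_X$ the indicator function of $X$ ($0$ on $X$, $+\infty$ outside). For $x\in\mathbb{R}^n$, $\|x\|_0$ is the number of nonzero components of $x$ and $I(x)=\{i: x_i=0\}$. Let $f:\mathbb{R}^n\to\mathbb{R}$ be convex and differentiable, bounded from below on $X$, with $\nabla f$ $L$-Lipschitz continuous on $X$ ($L>0$). Define $H(x)=\lambda\|x\|_0+f(x)+\delta_X(x)$. Algorithm 1. Choose $\mu>0$, extrapolation weights $0\le\omega_k\le\omega<1$, and a starting point $x^0\in X$; set $x^{-1}=x^0$. For $k=0,1,2,\dots$: define $y^{k+1}\in\mathbb{R}^n$ by $y^{k+1}_i=x^k_i+\omega_k(x^k_i-x^{k-1}_i)$ for $i\notin I(x^k)$ and $y^{k+1}_i=x^k_i\,(=0)$ for $i\in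 I(x^k)$ (extrapolation only on the support of $x^k$); if $\langle y^{k+1}-x^k,\nabla f(y^{k+1})\rangle>0$ or $y^{k+1}\notin X$, reset $y^{k+1}:=x^k$; then take any $$x^{k+1}\in\arg\min_{x\in X}\ \lambda\|x\|_0+\frac{L}{2}\Big\|x-y^{k+1}+\frac1L\nabla f(y^{k+1})\Big\|^2+\frac{\mu}{2}\|x-y^{k+1}\|^2 .$$ *)

(* Stdlib Reals.  Vectors of R^n are modelled as functions nat -> R
   whose components of index >= n vanish (see [inRn]). *)
From Stdlib Require Import Reals Lra Lia.
Open Scope R_scope.

Definition vec := nat -> R.

Fixpoint vsum (n : nat) (f : nat -> R) : R :=
  match n with O => 0 | S m => vsum m f + f m end.

Definition vadd (x y : vec) : vec := fun i => x i + y i.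
Definition vsub (x y : vec) : vec := fun i => x i - y i.
Definition vscal (a : R) (x : vec) : vec := fun i => a * x i.

Definition inner (n : nat) (x y : vec) : R := vsum n (fun i => x i * y i).
Definition norm2 (n : nat) (x : vec) : R := inner n x x.
Definition norm (n : nat) (x : vec) : R := sqrt (norm2 n x).

Definition inRn (n : nat) (x : vec) : Prop := forall i, (n <= i)%nat -> x i = 0.

Fixpoint l0 (n : nat) (x : vec) : nat :=
  match n with
  | O => O
  | S m => (l0 m x + (if Req_EM_T (x m) 0 then 0 else 1))%nat
  end.

Definition inX (n : nat) (l u : vec) (x : vec) : Prop :=
  inRn n x /\ forall i, (i < n)%nat -> l i <= x i <= u i.

Definition convex_on_Rn (n : nat) (f : vec -> R) : Prop :=
  forall x y t, inRn n x -> inRn n y -> 0 <= t <= 1 ->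
    f (vadd (vscal t x) (vscal (1 - t) y)) <= t * f x + (1 - t) * f y.

Definition has_gradient (n : nat) (f : vec -> R) (gradf : vec -> vec) : Prop :=
  forall x, inRn n x ->
    forall eps, 0 < eps -> exists delta, 0 < delta /\
      forall h, inRn n h -> norm n h < delta ->
        Rabs (f (vadd x h) - f x - inner n (gradf x) h) <= eps * norm n h.

Definition lipschitz_on_X (n : nat) (l u : vec) (gradf : vec -> vec) (L : R) : Prop :=
  forall x y, inX n l u x -> inX n l u y ->
    norm n (vsub (gradf x) (gradf y)) <= L * norm n (vsub x y).

(* H(x) = lam ||x||_0 + f(x) + delta_X(x), evaluated at points of X
   (where delta_X = 0); all iterates x^k lie in X. *)
Definition Hval (n : nat) (lam : R) (f : vec -> R) (x : vec) : R :=
  lam * INR (l0 n x) + f x.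

Definition subprob (n : nat) (lam L mu : R) (gradf : vec -> vec) (y x : vec) : R :=
  lam * INR (l0 n x)
  + L / 2 * norm2 n (vadd (vsub x y) (vscal (1 / L) (gradf y)))
  + mu / 2 * norm2 n (vsub x y).

Definition extrap (xk xkm1 : vec) (wk : R) : vec :=
  fun i => if Req_EM_T (xk i) 0 then xk i else xk i + wk * (xk i - xkm1 i).

(* x, y are sequences generated by Algorithm 1 with weights w (y 0 unused) *)
Definition Alg1 (n : nat) (l u : vec) (lam L mu : R) (gradf : vec -> vec)
    (w : nat -> R) (x y : nat -> vec) : Prop :=
  inX n l u (x 0%nat) /\
  forall k : nat,
    let xprev := match k with O => x 0%nat | S j => x j end in
    let yt := extrap (x k) xprev (w k) in
    let reset := inner n (vsub yt (x k)) (gradf yt) > 0 \/ ~ inX n l u yt in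
    (reset -> y (S k) = x k) /\
    (~ reset -> y (S k) = yt) /\
    inX n l u (x (S k)) /\
    (forall z, inX n l u z ->
       subprob n lam L mu gradf (y (S k)) (x (S k))
       <= subprob n lam L mu gradf (y (S k)) z).

(* The extrapolated point y^{k+1} keeps the zeros of x^k and, thanks to the safeguard
   <y - x^k, grad f(y)> <= 0 and convexity, satisfies H(y^{k+1}) <= H(x^k).  Comparing the
   subproblem value of x^{k+1} with that of y^{k+1} and using the descent lemma gives
   H(x^{k+1}) + mu/2 ||x^{k+1} - y^{k+1}||^2 <= H(x^k), so the gaps are summable because H
   is bounded below.  A coordinate that turns nonzero costs lam in the l0 term, which the
   quadratic model can only pay for if lam^2 <= (grad f(y)_i)^2 ||x^{k+1} - y^{k+1}||^2;
   the gradient is bounded on the box and the gaps vanish, so eventually zeros persist,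
   ||x^k||_0 is eventually non-increasing, hence constant.  Finally, since the extrapolation
   step is at most omega ||x^k - x^{k-1}||, the steps obey
   ||x^{k+1} - x^k||^2 <= c gap_k + q ||x^k - x^{k-1}||^2 with q < 1, hence are summable. *)

From Stdlib Require Import Reals Lra Lia Classical FunctionalExtensionality.
Open Scope R_scope.

Lemma vsum_ext n F G : (forall i, (i < n)%nat -> F i = G i) -> vsum n F = vsum n G.
Proof.
  induction n as [|n IH]; intros H; simpl; [reflexivity|].
  rewrite IH by (intros; apply H; lia). rewrite H by lia. reflexivity.
Qed.

Lemma vsum_le n F G : (forall i, (i < n)%nat -> F i <= G i) -> vsum n F <= vsum n G.
Proof.
  induction n as [|n IH]; intros H; simpl; [lra|].
  assert (vsum n F <= vsum n G) by (apply IH; intros; apply H; lia).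
  assert (F n <= G n) by (apply H; lia).
  lra.
Qed.

Lemma vsum_add n F G : vsum n (fun i => F i + G i) = vsum n F + vsum n G.
Proof. induction n as [|n IH]; simpl; [lra|]. rewrite IH; ring. Qed.

Lemma vsum_scal n c F : vsum n (fun i => c * F i) = c * vsum n F.
Proof. induction n as [|n IH]; simpl; [lra|]. rewrite IH; ring. Qed.

Lemma vsum_zero n : vsum n (fun _ => 0) = 0.
Proof. induction n as [|n IH]; simpl; [reflexivity|]. rewrite IH; ring. Qed.

Lemma vsum_nonneg n F : (forall i, (i < n)%nat -> 0 <= F i) -> 0 <= vsum n F.
Proof. intros H. rewrite <- (vsum_zero n). now apply vsum_le. Qed.

Lemma vsum_ge_term n F i :
  (i < n)%nat -> (forall j, (j < n)%nat -> 0 <= F j) -> F i <= vsum n F.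
Proof.
  induction n as [|n IH]; intros Hi H; simpl; [lia|].
  assert (0 <= vsum n F) by (apply vsum_nonneg; intros; apply H; lia).
  destruct (Nat.eq_dec i n) as [->|Hne]; [lra|].
  assert (F i <= vsum n F) by (apply IH; [lia | intros; apply H; lia]).
  assert (0 <= F n) by (apply H; lia).
  lra.
Qed.

Lemma vsum_sub_differ_at n F G i :
  (i < n)%nat -> (forall j, (j < n)%nat -> j <> i -> F j = G j) ->
  vsum n F - vsum n G = F i - G i.
Proof.
  induction n as [|n IH]; intros Hi H; simpl; [lia|].
  destruct (Nat.eq_dec i n) as [->|Hne].
  - rewrite (vsum_ext n F G) by (intros; apply H; lia). ring.
  - rewrite (H n) by lia. rewrite <- IH by (try lia; intros; apply H; lia). ring.
Qed.

Lemma inner_sub_l n a b d : inner n (vsub a b) d = inner n a d - inner n b d.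
Proof.
  unfold inner, vsub.
  replace (vsum n (fun i => a i * d i) - vsum n (fun i => b i * d i))
    with (vsum n (fun i => a i * d i) + (-1) * vsum n (fun i => b i * d i)) by ring.
  rewrite <- vsum_scal, <- vsum_add. apply vsum_ext; intros; ring.
Qed.

Lemma inner_scal_r n a c d : inner n a (vscal c d) = c * inner n a d.
Proof. unfold inner, vscal. rewrite <- vsum_scal. apply vsum_ext; intros; ring. Qed.

Lemma norm2_nonneg n a : 0 <= norm2 n a.
Proof. apply vsum_nonneg; intros. nra. Qed.

Lemma norm2_scal n c a : norm2 n (vscal c a) = c ^ 2 * norm2 n a.
Proof. unfold norm2, inner, vscal. rewrite <- vsum_scal. apply vsum_ext; intros; ring. Qed.

Lemma norm2_vsub_diag n a : norm2 n (vsub a a) = 0.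
Proof. unfold norm2, inner, vsub. rewrite <- (vsum_zero n). apply vsum_ext; intros; ring. Qed.

Lemma inner_vsub_diag_r n a b : inner n a (vsub b b) = 0.
Proof. unfold inner, vsub. rewrite <- (vsum_zero n). apply vsum_ext; intros; ring. Qed.

Lemma sqr_coord_le_norm2 n a i : (i < n)%nat -> a i ^ 2 <= norm2 n a.
Proof.
  intros Hi. unfold norm2, inner. replace (a i ^ 2) with (a i * a i) by ring.
  apply (vsum_ge_term n (fun j => a j * a j)); [exact Hi | intros; nra].
Qed.

Lemma norm_scal n c a : norm n (vscal c a) = Rabs c * norm n a.
Proof.
  unfold norm. rewrite norm2_scal, sqrt_mult_alt by apply pow2_ge_0.
  rewrite <- Rsqr_pow2, sqrt_Rsqr_abs. reflexivity.
Qed.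

Lemma inner_le_young n a b s :
  0 < s -> inner n a b <= s / 2 * norm2 n a + / (2 * s) * norm2 n b.
Proof.
  intros Hs. unfold norm2, inner. rewrite <- !vsum_scal, <- vsum_add.
  apply vsum_le; intros i _.
  assert (0 <= (s * a i - b i) ^ 2 / (2 * s))
    by (apply Rmult_le_pos; [apply pow2_ge_0 | left; apply Rinv_0_lt_compat; lra]).
  assert (s / 2 * (a i * a i) + / (2 * s) * (b i * b i) - a i * b i
          = (s * a i - b i) ^ 2 / (2 * s)) by (field; lra).
  lra.
Qed.

Lemma norm2_vadd_le n a b q :
  0 < q < 1 -> norm2 n (vadd a b) <= / (1 - q) * norm2 n a + / q * norm2 n b.
Proof.
  intros Hq. unfold norm2, inner, vadd. rewrite <- !vsum_scal, <- vsum_add.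
  apply vsum_le; intros i _.
  assert (0 <= (q * a i - (1 - q) * b i) ^ 2 / (q * (1 - q)))
    by (apply Rmult_le_pos; [apply pow2_ge_0 | left; apply Rinv_0_lt_compat; nra]).
  assert (/ (1 - q) * (a i * a i) + / q * (b i * b i) - (a i + b i) * (a i + b i)
          = (q * a i - (1 - q) * b i) ^ 2 / (q * (1 - q))) by (field; lra).
  lra.
Qed.

Lemma inRn_vadd n a b : inRn n a -> inRn n b -> inRn n (vadd a b).
Proof. intros Ha Hb i Hi; unfold vadd; rewrite Ha, Hb by exact Hi; ring. Qed.

Lemma inRn_vsub n a b : inRn n a -> inRn n b -> inRn n (vsub a b).
Proof. intros Ha Hb i Hi; unfold vsub; rewrite Ha, Hb by exact Hi; ring. Qed.

Lemma inRn_vscal n c a : inRn n a -> inRn n (vscal c a).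
Proof. intros Ha i Hi; unfold vscal; rewrite Ha by exact Hi; ring. Qed.

Lemma inX_segment n l u a b t :
  inX n l u a -> inX n l u b -> 0 <= t <= 1 -> inX n l u (vadd b (vscal t (vsub a b))).
Proof.
  intros [Ha Ha'] [Hb Hb'] Ht. split.
  - apply inRn_vadd, inRn_vscal, inRn_vsub; assumption.
  - intros i Hi. specialize (Ha' i Hi). specialize (Hb' i Hi).
    unfold vadd, vscal, vsub. nra.
Qed.

Lemma norm2_vsub_le_box n l u a b :
  inX n l u a -> inX n l u b -> norm2 n (vsub a b) <= vsum n (fun i => (u i - l i) ^ 2).
Proof.
  intros [_ Ha] [_ Hb]. apply vsum_le; intros i Hi.
  specialize (Ha i Hi). specialize (Hb i Hi). unfold vsub. nra.
Qed.

Lemma l0_le n a b :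
  (forall i, (i < n)%nat -> a i = 0 -> b i = 0) -> (l0 n b <= l0 n a)%nat.
Proof.
  induction n as [|n IH]; intros H; simpl; [lia|].
  assert (l0 n b <= l0 n a)%nat by (apply IH; intros; apply H; auto; lia).
  destruct (Req_EM_T (a n) 0) as [Ha|Ha], (Req_EM_T (b n) 0) as [Hb|Hb]; try lia.
  exfalso; apply Hb, H; auto.
Qed.

Lemma l0_eq_zeros n a b :
  (forall i, (i < n)%nat -> a i = 0 -> b i = 0) -> l0 n a = l0 n b ->
  forall i, (i < n)%nat -> b i = 0 -> a i = 0.
Proof.
  induction n as [|n IH]; simpl; intros H E i Hi Hb; [lia|].
  assert (l0 n b <= l0 n a)%nat by (apply l0_le; intros; apply H; auto; lia).
  assert (IHn : l0 n a = l0 n b -> (i < n)%nat -> a i = 0).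
  { intros E' Hin. apply (IH (fun j Hj => H j ltac:(lia)) E' i Hin Hb). }
  destruct (Req_EM_T (a n) 0) as [Ha|Ha], (Req_EM_T (b n) 0) as [Hb'|Hb'];
    destruct (Nat.eq_dec i n) as [->|Hne]; try tauto; try (apply IHn; lia);
    exfalso; apply Hb', H; auto.
Qed.

Definition vzero_at (i : nat) (z : vec) : vec :=
  fun j => if Nat.eq_dec j i then 0 else z j.

Lemma l0_vzero_at n z i :
  (i < n)%nat -> z i <> 0 -> l0 n z = S (l0 n (vzero_at i z)).
Proof.
  induction n as [|n IH]; intros Hi Hz; simpl; [lia|].
  destruct (Nat.eq_dec n i) as [->|Hne].
  - assert (Hzi : vzero_at i z i = 0)
      by (unfold vzero_at; destruct (Nat.eq_dec i i); tauto).
    assert (l0 i z = l0 i (vzero_at i z)).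
    { apply Nat.le_antisymm; apply l0_le; intros j Hj;
        unfold vzero_at; destruct (Nat.eq_dec j i); auto; lia. }
    rewrite Hzi. destruct (Req_EM_T (z i) 0), (Req_EM_T 0 0); tauto || lia.
  - assert (Hzn : vzero_at i z n = z n)
      by (unfold vzero_at; destruct (Nat.eq_dec n i); tauto).
    rewrite Hzn, IH by (auto; lia).
    destruct (Req_EM_T (z n) 0); lia.
Qed.

Lemma vadd_vscal_0 y d : vadd y (vscal 0 d) = y.
Proof. apply functional_extensionality; intro i; unfold vadd, vscal; ring. Qed.

Lemma derivable_pt_lim_along_line n f gradf y d t :
  has_gradient n f gradf -> inRn n y -> inRn n d ->
  derivable_pt_lim (fun s => f (vadd y (vscal s d))) t
                   (inner n (gradf (vadd y (vscal t d))) d).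
Proof.
  intros Hg Hy Hd eps Heps.
  set (p := vadd y (vscal t d)).
  assert (Hp : inRn n p) by (apply inRn_vadd, inRn_vscal; assumption).
  set (K := norm n d).
  assert (HK : 0 <= K) by apply sqrt_pos.
  destruct (Hg p Hp (eps / 2 / (K + 1))) as [delta [Hdelta Hb]];
    [apply Rdiv_lt_0_compat; lra|].
  assert (Hpos : 0 < delta / (K + 1)) by (apply Rdiv_lt_0_compat; lra).
  exists (mkposreal _ Hpos). intros h Hh0 Hh; simpl in Hh.
  replace (vadd y (vscal (t + h) d)) with (vadd p (vscal h d))
    by (apply functional_extensionality; intro i; unfold p, vadd, vscal; ring).
  assert (Hah : 0 < Rabs h) by (apply Rabs_pos_lt; exact Hh0).
  assert (Hn : norm n (vscal h d) < delta).
  { rewrite norm_scal. fold K.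
    apply (Rmult_lt_compat_r (K + 1)) in Hh; [|lra].
    unfold Rdiv in Hh. rewrite Rmult_assoc, Rinv_l in Hh by lra. nra. }
  specialize (Hb (vscal h d) (inRn_vscal _ _ _ Hd) Hn).
  rewrite inner_scal_r, norm_scal in Hb. fold K in Hb.
  set (A := f (vadd p (vscal h d)) - f p) in *.
  set (D := inner n (gradf p) d) in *.
  replace (A / h - D) with ((A - h * D) * / h) by (field; exact Hh0).
  rewrite Rabs_mult, Rabs_inv.
  replace (f (vadd p (vscal h d)) - f p - h * D) with (A - h * D) in Hb by (unfold A; ring).
  apply (Rmult_le_compat_r (/ Rabs h)) in Hb; [|left; apply Rinv_0_lt_compat; exact Hah].
  replace (eps / 2 / (K + 1) * (Rabs h * K) * / Rabs h) with (eps / 2 * (K / (K + 1)))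
    in Hb by (field; lra).
  assert (K / (K + 1) < 1).
  { apply (Rmult_lt_reg_r (K + 1)); [lra|].
    unfold Rdiv. rewrite Rmult_assoc, Rinv_l; lra. }
  assert (0 <= K / (K + 1))
    by (apply Rmult_le_pos; [lra | left; apply Rinv_0_lt_compat; lra]).
  nra.
Qed.

Lemma convex_gradient_ineq n f gradf a b :
  convex_on_Rn n f -> has_gradient n f gradf -> inRn n a -> inRn n b ->
  f b + inner n (gradf b) (vsub a b) <= f a.
Proof.
  intros Hc Hg Ha Hb.
  set (d := vsub a b).
  assert (Hd : inRn n d) by (apply inRn_vsub; assumption).
  assert (Hder := derivable_pt_lim_along_line n f gradf b d 0 Hg Hb Hd).
  rewrite vadd_vscal_0 in Hder.
  set (D := inner n (gradf b) d) in *.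
  assert (Hcv : forall t, 0 <= t <= 1 -> f (vadd b (vscal t d)) <= t * f a + (1 - t) * f b).
  { intros t Ht. replace (vadd b (vscal t d)) with (vadd (vscal t a) (vscal (1 - t) b))
      by (apply functional_extensionality; intro i; unfold d, vadd, vscal, vsub; ring).
    apply Hc; assumption. }
  destruct (Rle_or_lt (f b + D) (f a)) as [H|H]; [exact H|exfalso].
  (* by convexity the difference quotient at small t > 0 is at most f a - f b < D *)
  destruct (Hder (f b + D - f a)) as [del Hdel]; [lra|].
  set (h := Rmin (del / 2) (1 / 2)).
  assert (Hh : 0 < h) by (apply Rmin_glb_lt; [destruct del; simpl; lra | lra]).
  assert (Hh1 : h <= 1 / 2) by apply Rmin_r.
  assert (Hh2 : h <= del / 2) by apply Rmin_l.
  specialize (Hdel h ltac:(lra) ltac:(rewrite Rabs_right; destruct del; simpl in *; lra)).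
  rewrite Rplus_0_l, vadd_vscal_0 in Hdel.
  specialize (Hcv h ltac:(lra)).
  assert ((f (vadd b (vscal h d)) - f b) / h <= f a - f b).
  { apply (Rmult_le_reg_r h); [exact Hh|].
    unfold Rdiv. rewrite Rmult_assoc, Rinv_l; lra. }
  apply Rabs_def2 in Hdel. lra.
Qed.

Section Lipschitz.

Variables (n : nat) (l u : vec) (gradf : vec -> vec) (L : R).
Hypothesis HL : 0 < L.
Hypothesis HLip : lipschitz_on_X n l u gradf L.

Lemma lipschitz_norm2 a b : inX n l u a -> inX n l u b ->
  norm2 n (vsub (gradf a) (gradf b)) <= L ^ 2 * norm2 n (vsub a b).
Proof.
  intros Ha Hb.
  assert (Hs := HLip a b Ha Hb). unfold norm in Hs.
  assert (E1 := sqrt_sqrt _ (norm2_nonneg n (vsub (gradf a) (gradf b)))).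
  assert (E2 := sqrt_sqrt _ (norm2_nonneg n (vsub a b))).
  assert (0 <= sqrt (norm2 n (vsub (gradf a) (gradf b)))) by apply sqrt_pos.
  nra.
Qed.

Lemma lipschitz_inner_le a b : inX n l u a -> inX n l u b ->
  inner n (vsub (gradf a) (gradf b)) (vsub a b) <= L * norm2 n (vsub a b).
Proof.
  intros Ha Hb.
  assert (Hy := inner_le_young n (vsub (gradf a) (gradf b)) (vsub a b) (/ L)
                  (Rinv_0_lt_compat _ HL)).
  assert (Hl := lipschitz_norm2 a b Ha Hb).
  assert (/ L / 2 * norm2 n (vsub (gradf a) (gradf b))
          <= / L / 2 * (L ^ 2 * norm2 n (vsub a b)))
    by (apply Rmult_le_compat_l; [left; apply Rdiv_lt_0_compat;
          [apply Rinv_0_lt_compat|]; lra | exact Hl]).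
  replace (/ L / 2 * (L ^ 2 * norm2 n (vsub a b))) with (L / 2 * norm2 n (vsub a b))
    in * by (field; lra).
  replace (/ (2 * / L)) with (L / 2) in Hy by (field; lra).
  lra.
Qed.

Lemma descent_lemma f a b :
  has_gradient n f gradf -> inX n l u a -> inX n l u b ->
  f a <= f b + inner n (gradf b) (vsub a b) + L / 2 * norm2 n (vsub a b).
Proof.
  intros Hg Ha Hb.
  set (d := vsub a b).
  set (p := fun t => vadd b (vscal t d)).
  set (D := fun t => inner n (gradf (p t)) d).
  set (N := norm2 n d).
  assert (Hd : inRn n d) by (apply inRn_vsub; [apply Ha | apply Hb]).
  (* mean value theorem for t |-> f (p t) - D 0 t - (L N / 2) t^2 on [0, 1] *)
  assert (Hder : forall c, derivable_pt_lim
     ((fun t => f (p t)) - (mult_real_fct (D 0) id + mult_real_fct (L / 2 * N) (id * id)))%F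
     c (D c - (D 0 * 1 + L / 2 * N * (1 * id c + id c * 1)))).
  { intro c. apply derivable_pt_lim_minus.
    - apply derivable_pt_lim_along_line; [exact Hg | apply Hb | exact Hd].
    - apply derivable_pt_lim_plus; apply derivable_pt_lim_scal;
        [|apply derivable_pt_lim_mult]; apply derivable_pt_lim_id. }
  destruct (MVT_cor2 _ _ 0 1 Rlt_0_1 (fun c _ => Hder c)) as [c [Ec Hc]].
  unfold minus_fct, plus_fct, mult_real_fct, mult_fct, id in Ec.
  assert (Hp0 : p 0 = b) by apply vadd_vscal_0.
  assert (Hp1 : p 1 = a)
    by (apply functional_extensionality; intro i; unfold p, d, vadd, vscal, vsub; ring).
  rewrite Hp0, Hp1 in Ec.
  assert (Hpc : vsub (p c) (p 0) = vscal c d)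
    by (apply functional_extensionality; intro i; unfold p, vsub, vadd, vscal; ring).
  assert (Hgap : c * (D c - D 0) <= L * c ^ 2 * N).
  { unfold D. rewrite <- inner_sub_l, <- inner_scal_r, <- Hpc.
    replace (L * c ^ 2 * N) with (L * norm2 n (vsub (p c) (p 0)))
      by (rewrite Hpc, norm2_scal; unfold N; ring).
    apply lipschitz_inner_le; apply inX_segment; auto; lra. }
  assert (D c - D 0 <= L * c * N).
  { apply (Rmult_le_reg_l c); [lra|]. nra. }
  assert (D 0 = inner n (gradf b) d) by (unfold D; rewrite Hp0; reflexivity).
  fold N. nra.
Qed.

Lemma lipschitz_grad_coord_bounded z0 : inX n l u z0 ->
  exists G, 0 <= G /\ forall z, inX n l u z -> forall i, (i < n)%nat -> gradf z i ^ 2 <= G.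
Proof.
  intros Hz0.
  set (V := vsum n (fun i => (u i - l i) ^ 2)).
  assert (HV : 0 <= V) by (apply vsum_nonneg; intros; apply pow2_ge_0).
  assert (0 <= norm2 n (gradf z0)) by apply norm2_nonneg.
  exists (2 * (L ^ 2 * V) + 2 * norm2 n (gradf z0)).
  split; [assert (0 <= L ^ 2 * V) by (apply Rmult_le_pos; [apply pow2_ge_0 | exact HV]); lra|].
  intros z Hz i Hi.
  assert (Hsplit : gradf z = vadd (vsub (gradf z) (gradf z0)) (gradf z0))
    by (apply functional_extensionality; intro j; unfold vadd, vsub; ring).
  assert (H2 := norm2_vadd_le n (vsub (gradf z) (gradf z0)) (gradf z0) (1 / 2) ltac:(lra)).
  rewrite <- Hsplit in H2. replace (/ (1 - 1 / 2)) with 2 in H2 by field.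
  replace (/ (1 / 2)) with 2 in H2 by field.
  assert (Hl := lipschitz_norm2 z z0 Hz Hz0).
  assert (L ^ 2 * norm2 n (vsub z z0) <= L ^ 2 * V)
    by (apply Rmult_le_compat_l; [apply pow2_ge_0 | apply norm2_vsub_le_box; assumption]).
  assert (Hc := sqr_coord_le_norm2 n (gradf z) i Hi).
  lra.
Qed.

End Lipschitz.

Lemma subprob_expand n lam L mu gradf y z : L <> 0 ->
  subprob n lam L mu gradf y z
  = lam * INR (l0 n z) + (L + mu) / 2 * norm2 n (vsub z y)
    + inner n (gradf y) (vsub z y) + / (2 * L) * norm2 n (gradf y).
Proof.
  intros HL. unfold subprob, norm2, inner. rewrite !Rplus_assoc. f_equal.
  rewrite <- !vsum_scal, <- !vsum_add. apply vsum_ext; intros.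
  unfold vadd, vsub, vscal. field. exact HL.
Qed.

Lemma subprob_vzero_at_bound n lam L mu gradf y z i :
  0 < lam -> 0 < L -> 0 <= mu -> (i < n)%nat -> y i = 0 -> z i <> 0 ->
  subprob n lam L mu gradf y z <= subprob n lam L mu gradf y (vzero_at i z) ->
  lam ^ 2 <= gradf y i ^ 2 * z i ^ 2.
Proof.
  intros Hlam HL Hmu Hi Hy Hz Hle.
  rewrite !subprob_expand in Hle by lra.
  rewrite (l0_vzero_at n z i Hi Hz), S_INR in Hle.
  assert (Hoff : forall j, (j < n)%nat -> j <> i -> vzero_at i z j = z j)
    by (intros j _ Hj; unfold vzero_at; destruct (Nat.eq_dec j i); tauto).
  assert (Hzi : vzero_at i z i = 0)
    by (unfold vzero_at; destruct (Nat.eq_dec i i); tauto).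
  assert (Hn : norm2 n (vsub z y) - norm2 n (vsub (vzero_at i z) y) = z i ^ 2).
  { unfold norm2, inner.
    rewrite (vsum_sub_differ_at n _ _ i Hi) by (intros j Hj Hji; unfold vsub; rewrite Hoff; auto).
    unfold vsub. rewrite Hzi, Hy. ring. }
  assert (Hin : inner n (gradf y) (vsub z y) - inner n (gradf y) (vsub (vzero_at i z) y)
                = gradf y i * z i).
  { unfold inner.
    rewrite (vsum_sub_differ_at n _ _ i Hi) by (intros j Hj Hji; unfold vsub; rewrite Hoff; auto).
    unfold vsub. rewrite Hzi, Hy. ring. }
  assert (0 <= (L + mu) / 2 * z i ^ 2)
    by (apply Rmult_le_pos; [lra | apply pow2_ge_0]).
  assert (lam <= - (gradf y i * z i)) by nra.
  nra.
Qed.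


Lemma infinite_sum_of_bounded_partial (a : nat -> R) B :
  (forall j, 0 <= a j) -> (forall N, sum_f_R0 a N <= B) -> exists s, infinite_sum a s.
Proof.
  intros Ha HB.
  assert (G : Un_growing (sum_f_R0 a)) by (intro m; simpl; specialize (Ha (S m)); lra).
  assert (U : has_ub (sum_f_R0 a)) by (exists B; intros z [i ->]; apply HB).
  destruct (growing_cv _ G U) as [s Hs]. exists s. exact Hs.
Qed.

Lemma infinite_sum_cv0 (a : nat -> R) s : infinite_sum a s -> Un_cv a 0.
Proof.
  intros H eps Heps. destruct (H (eps / 2)) as [N HN]; [lra|].
  exists (S N). intros [|m] Hm; [lia|].
  assert (H1 := HN m ltac:(lia)). assert (H2 := HN (S m) ltac:(lia)).
  unfold R_dist in *. simpl in H2.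
  replace (a (S m) - 0) with ((sum_f_R0 a m + a (S m) - s) - (sum_f_R0 a m - s)) by ring.
  eapply Rle_lt_trans; [apply Rabs_triang|]. rewrite Rabs_Ropp. lra.
Qed.

Lemma Un_cv_sqrt_0 (b : nat -> R) :
  (forall j, 0 <= b j) -> Un_cv b 0 -> Un_cv (fun j => sqrt (b j)) 0.
Proof.
  intros Hb H eps Heps. destruct (H (eps * eps)) as [N HN]; [nra|].
  exists N. intros m Hm. specialize (HN m Hm). unfold R_dist in *.
  rewrite Rminus_0_r in *. rewrite Rabs_right in HN by (apply Rle_ge, Hb).
  rewrite Rabs_right by apply Rle_ge, sqrt_pos.
  rewrite <- (sqrt_square eps) by lra. apply sqrt_lt_1_alt. split; [apply Hb | exact HN].
Qed.

Lemma summable_of_sufficient_decrease (h d : nat -> R) c m :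
  0 < c -> (forall k, 0 <= d k) -> (forall k, m <= h k) ->
  (forall k, h (S k) + c * d k <= h k) -> exists s, infinite_sum d s.
Proof.
  intros Hc Hd Hm Hdec.
  assert (Htel : forall N, c * sum_f_R0 d N <= h 0%nat - h (S N)).
  { induction N as [|N IH]; simpl;
      [specialize (Hdec 0%nat) | specialize (Hdec (S N))]; lra. }
  apply (infinite_sum_of_bounded_partial d ((h 0%nat - m) / c) Hd).
  intro N. apply (Rmult_le_reg_l c); [exact Hc|].
  replace (c * ((h 0%nat - m) / c)) with (h 0%nat - m) by (field; lra).
  specialize (Htel N). specialize (Hm (S N)). lra.
Qed.

Lemma summable_of_contraction (a b : nat -> R) c q s :
  0 <= c -> 0 <= q < 1 -> (forall j, 0 <= a j) -> (forall j, 0 <= b j) ->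
  infinite_sum b s ->
  a 0%nat <= c * b 0%nat -> (forall k, a (S k) <= c * b (S k) + q * a k) ->
  exists t, infinite_sum a t.
Proof.
  intros Hc Hq Ha Hb Hs H0 Hrec.
  assert (Hpart : forall N, sum_f_R0 a N <= c * sum_f_R0 b N + q * (sum_f_R0 a N - a N)).
  { induction N as [|N IH]; simpl; [lra|]. specialize (Hrec N). lra. }
  assert (Hbs : forall N, sum_f_R0 b N <= s).
  { apply growing_ineq; [intro N; simpl; specialize (Hb (S N)); lra | exact Hs]. }
  apply (infinite_sum_of_bounded_partial a (c * s / (1 - q)) Ha).
  intro N. apply (Rmult_le_reg_l (1 - q)); [lra|].
  replace ((1 - q) * (c * s / (1 - q))) with (c * s) by (field; lra).
  specialize (Hpart N). specialize (Hbs N). specialize (Ha N).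
  assert (c * sum_f_R0 b N <= c * s) by (apply Rmult_le_compat_l; assumption).
  nra.
Qed.

Lemma nat_eventually_constant (s : nat -> nat) K :
  (forall k, (K <= k)%nat -> (s (S k) <= s k)%nat) ->
  exists k0, (K <= k0)%nat /\ forall k, (k0 <= k)%nat -> s k = s k0.
Proof.
  intros H.
  assert (Hmono : forall k j, (K <= k)%nat -> (k <= j)%nat -> (s j <= s k)%nat).
  { intros k j Hk Hj. induction Hj as [|j Hj IH]; [lia|]. specialize (H j ltac:(lia)). lia. }
  assert (Hbound : forall m k, (K <= k)%nat -> (s k <= m)%nat ->
            exists k0, (K <= k0)%nat /\ forall j, (k0 <= j)%nat -> s j = s k0).
  { induction m as [|m IH]; intros k Hk Hs.
    - exists k. split; [exact Hk|]. intros j Hj. specialize (Hmono k j Hk Hj). lia.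
    - destruct (classic (forall j, (k <= j)%nat -> s j = s k)) as [A|A].
      + exists k. split; assumption.
      + apply not_all_ex_not in A. destruct A as [j A].
        apply imply_to_and in A. destruct A as [Hj A].
        apply (IH j); [lia|]. specialize (Hmono k j Hk Hj). lia. }
  exact (Hbound (s K) K (le_n K) (le_n _)).
Qed.

Lemma zeros_eventually_constant n (x : nat -> vec) K :
  (forall k, (K <= k)%nat -> forall i, (i < n)%nat -> x k i = 0 -> x (S k) i = 0) ->
  exists k0, forall k, (k0 <= k)%nat -> forall i, (i < n)%nat -> (x k i = 0 <-> x k0 i = 0).
Proof.
  intros Hpers.
  destruct (nat_eventually_constant (fun k => l0 n (x k)) K) as [k0 [Hk0 Hconst]].
  { intros k Hk. apply l0_le. intros; apply Hpers; assumption. }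
  assert (Hincl : forall k, (k0 <= k)%nat -> forall i, (i < n)%nat -> x k0 i = 0 -> x k i = 0).
  { intros k Hk. induction Hk as [|k Hk IH]; [tauto|].
    intros i Hi Hz. apply Hpers; [lia | exact Hi | apply IH; assumption]. }
  exists k0. intros k Hk i Hi. split; [|apply Hincl; assumption].
  apply (l0_eq_zeros n (x k0) (x k)); [apply Hincl; exact Hk | symmetry; apply Hconst, Hk | exact Hi].
Qed.

Definition prev_iterate (x : nat -> vec) (k : nat) : vec :=
  match k with O => x 0%nat | S j => x j end.

Section Algorithm1.

Variables (n : nat) (lam : R) (l u : vec) (f : vec -> R) (gradf : vec -> vec).
Variables (L mu wbar : R) (w : nat -> R) (x y : nat -> vec).
Hypothesis Hlam : 0 < lam.
Hypothesis Hconv : convex_on_Rn n f.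
Hypothesis Hgrad : has_gradient n f gradf.
Hypothesis Hbdd : exists m, forall z, inX n l u z -> m <= f z.
Hypothesis HL : 0 < L.
Hypothesis HLip : lipschitz_on_X n l u gradf L.
Hypothesis Hmu : 0 < mu.
Hypothesis Hw : forall k, 0 <= w k <= wbar.
Hypothesis Hwbar : wbar < 1.
Hypothesis Halg : Alg1 n l u lam L mu gradf w x y.

Let gap k := norm2 n (vsub (x (S k)) (y (S k))).

Lemma iterate_inX k : inX n l u (x k).
Proof. destruct k as [|k]; [apply Halg | apply (proj2 Halg k)]. Qed.

Lemma iterate_minimizes k z : inX n l u z ->
  subprob n lam L mu gradf (y (S k)) (x (S k)) <= subprob n lam L mu gradf (y (S k)) z.
Proof. apply (proj2 Halg k). Qed.

Lemma extrapolation_cases k :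
  y (S k) = x k \/
  (y (S k) = extrap (x k) (prev_iterate x k) (w k) /\
   inner n (vsub (y (S k)) (x k)) (gradf (y (S k))) <= 0 /\ inX n l u (y (S k))).
Proof.
  destruct (proj2 Halg k) as [Hreset [Hkeep _]]. cbv zeta in Hreset, Hkeep.
  set (yt := extrap (x k) (prev_iterate x k) (w k)).
  destruct (classic (inner n (vsub yt (x k)) (gradf yt) > 0 \/ ~ inX n l u yt)) as [R|R].
  - left. exact (Hreset R).
  - right. rewrite (Hkeep R). apply not_or_and in R. destruct R as [R1 R2].
    apply Rnot_gt_le in R1. apply NNPP in R2. auto.
Qed.

Lemma extrapolated_inX k : inX n l u (y (S k)).
Proof. destruct (extrapolation_cases k) as [-> | [_ [_ H]]]; [apply iterate_inX | exact H]. Qed.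

Lemma extrapolated_zeros k i : x k i = 0 -> y (S k) i = 0.
Proof.
  intros Hx. destruct (extrapolation_cases k) as [-> | [-> _]]; [exact Hx|].
  unfold extrap. destruct (Req_EM_T (x k i) 0); tauto.
Qed.

Lemma extrapolated_step k :
  norm2 n (vsub (y (S k)) (x k)) <= w k ^ 2 * norm2 n (vsub (x k) (prev_iterate x k)).
Proof.
  assert (Hnn : 0 <= w k ^ 2 * norm2 n (vsub (x k) (prev_iterate x k)))
    by (apply Rmult_le_pos; [apply pow2_ge_0 | apply norm2_nonneg]).
  destruct (extrapolation_cases k) as [-> | [-> _]]; [rewrite norm2_vsub_diag; exact Hnn|].
  unfold norm2, inner. rewrite <- vsum_scal. apply vsum_le; intros i _.
  unfold vsub, extrap. destruct (Req_EM_T (x k i) 0); nra.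
Qed.

Lemma Hval_extrapolated_le k : Hval n lam f (y (S k)) <= Hval n lam f (x k).
Proof.
  assert (Hl0 : (l0 n (y (S k)) <= l0 n (x k))%nat)
    by (apply l0_le; intros i _; apply extrapolated_zeros).
  apply le_INR in Hl0.
  assert (Hf : f (y (S k)) <= f (x k)).
  { destruct (extrapolation_cases k) as [-> | [_ [Hdir HyX]]]; [lra|].
    assert (Hg := convex_gradient_ineq n f gradf (x k) (y (S k)) Hconv Hgrad
                    (proj1 (iterate_inX k)) (proj1 HyX)).
    assert (inner n (gradf (y (S k))) (vsub (x k) (y (S k)))
            = - inner n (vsub (y (S k)) (x k)) (gradf (y (S k)))).
    { unfold inner.
      replace (- vsum n _) with ((-1) * vsum n (fun i => vsub (y (S k)) (x k) i
                                                   * gradf (y (S k)) i)) by ring.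
      rewrite <- vsum_scal. apply vsum_ext; intros; unfold vsub; ring. }
    lra. }
  unfold Hval. nra.
Qed.

Lemma sufficient_decrease k :
  Hval n lam f (x (S k)) + mu / 2 * gap k <= Hval n lam f (x k).
Proof.
  assert (Hmin := iterate_minimizes k (y (S k)) (extrapolated_inX k)).
  rewrite !subprob_expand, norm2_vsub_diag, inner_vsub_diag_r in Hmin by lra.
  assert (Hdesc := descent_lemma n l u gradf L HL HLip f (x (S k)) (y (S k)) Hgrad
                     (iterate_inX (S k)) (extrapolated_inX k)).
  assert (Hext := Hval_extrapolated_le k).
  unfold gap. unfold Hval in *. nra.
Qed.

Lemma gap_summable : exists s, infinite_sum gap s.
Proof.
  destruct Hbdd as [m Hm].
  apply (summable_of_sufficient_decrease (fun k => Hval n lam f (x k)) gap (mu / 2) m).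
  - lra.
  - intro k. apply norm2_nonneg.
  - intro k. unfold Hval. assert (0 <= INR (l0 n (x k))) by apply pos_INR.
    specialize (Hm _ (iterate_inX k)). nra.
  - exact sufficient_decrease.
Qed.

Lemma new_nonzero_gap_bound :
  exists G, 0 <= G /\ forall k i, (i < n)%nat -> x k i = 0 -> x (S k) i <> 0 ->
    lam ^ 2 <= G * gap k.
Proof.
  destruct (lipschitz_grad_coord_bounded n l u gradf L HLip (x 0%nat) (iterate_inX 0))
    as [G [HG0 HG]].
  exists G. split; [exact HG0|]. intros k i Hi Hx Hx'.
  assert (Hy := extrapolated_zeros k i Hx).
  (* zeroing coordinate i of x^{k+1} stays in the box, since l_i <= x^k_i = 0 <= u_i *)
  assert (Hz : inX n l u (vzero_at i (x (S k)))).
  { destruct (iterate_inX (S k)) as [HR HB]. split.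
    - intros j Hj. unfold vzero_at. destruct (Nat.eq_dec j i); [reflexivity | apply HR, Hj].
    - intros j Hj. unfold vzero_at. destruct (Nat.eq_dec j i) as [->|]; [|apply HB, Hj].
      rewrite <- Hx. apply (proj2 (iterate_inX k)), Hj. }
  assert (Hb := subprob_vzero_at_bound n lam L mu gradf (y (S k)) (x (S k)) i
                  Hlam HL (Rlt_le _ _ Hmu) Hi Hy Hx' (iterate_minimizes k _ Hz)).
  assert (Hcoord : x (S k) i ^ 2 <= gap k).
  { replace (x (S k) i) with (vsub (x (S k)) (y (S k)) i) by (unfold vsub; rewrite Hy; ring).
    apply sqr_coord_le_norm2, Hi. }
  assert (Hg := HG _ (extrapolated_inX k) i Hi).
  assert (0 <= x (S k) i ^ 2) by apply pow2_ge_0.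
  nra.
Qed.

Lemma zeros_persist_eventually :
  exists K, forall k, (K <= k)%nat -> forall i, (i < n)%nat -> x k i = 0 -> x (S k) i = 0.
Proof.
  destruct new_nonzero_gap_bound as [G [HG0 HG]].
  destruct gap_summable as [s Hs].
  destruct (infinite_sum_cv0 gap s Hs (lam ^ 2 / (G + 1))) as [K HK];
    [apply Rdiv_lt_0_compat; nra|].
  exists K. intros k Hk i Hi Hx.
  destruct (Req_EM_T (x (S k) i) 0) as [E|E]; [exact E|exfalso].
  specialize (HG k i Hi Hx E). specialize (HK k Hk). unfold R_dist in HK.
  assert (0 <= gap k) by apply norm2_nonneg.
  rewrite Rminus_0_r, Rabs_right in HK by lra.
  assert (G * gap k <= G * (lam ^ 2 / (G + 1))) by (apply Rmult_le_compat_l; lra).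
  assert (lam ^ 2 * (G / (G + 1)) < lam ^ 2).
  { assert (G / (G + 1) < 1).
    { apply (Rmult_lt_reg_r (G + 1)); [lra|]. unfold Rdiv. rewrite Rmult_assoc, Rinv_l; lra. }
    assert (0 < lam ^ 2) by nra. nra. }
  replace (G * (lam ^ 2 / (G + 1))) with (lam ^ 2 * (G / (G + 1))) in * by (field; lra).
  lra.
Qed.

Lemma iterate_step_summable :
  exists s, infinite_sum (fun k => norm2 n (vsub (x (S k)) (x k))) s.
Proof.
  assert (Hwb : 0 <= wbar) by (destruct (Hw 0%nat); lra).
  set (q := (1 + wbar) / 2).
  assert (Hq : 0 < q < 1) by (unfold q; lra).
  (* split x^{k+1} - x^k at y^{k+1}, weighting so the extrapolation part contracts by w_k^2 / q <= q *)
  assert (Hstep : forall k, norm2 n (vsub (x (S k)) (x k))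
                  <= / (1 - q) * gap k + q * norm2 n (vsub (x k) (prev_iterate x k))).
  { intro k.
    assert (Hsplit : vsub (x (S k)) (x k)
                     = vadd (vsub (x (S k)) (y (S k))) (vsub (y (S k)) (x k)))
      by (apply functional_extensionality; intro i; unfold vadd, vsub; ring).
    assert (H1 := norm2_vadd_le n (vsub (x (S k)) (y (S k))) (vsub (y (S k)) (x k)) q Hq).
    rewrite <- Hsplit in H1.
    assert (H2 := extrapolated_step k).
    assert (Hwk : w k ^ 2 <= q ^ 2) by (destruct (Hw k); unfold q in *; nra).
    assert (0 <= norm2 n (vsub (x k) (prev_iterate x k))) by apply norm2_nonneg.
    assert (/ q * norm2 n (vsub (y (S k)) (x k))
            <= / q * (q ^ 2 * norm2 n (vsub (x k) (prev_iterate x k)))).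
    { apply Rmult_le_compat_l; [left; apply Rinv_0_lt_compat; lra | nra]. }
    replace (/ q * (q ^ 2 * norm2 n (vsub (x k) (prev_iterate x k))))
      with (q * norm2 n (vsub (x k) (prev_iterate x k))) in * by (field; lra).
    fold (gap k) in H1. lra. }
  destruct gap_summable as [s Hs].
  apply (summable_of_contraction _ gap (/ (1 - q)) q s).
  - left; apply Rinv_0_lt_compat; lra.
  - lra.
  - intro k; apply norm2_nonneg.
  - intro k; apply norm2_nonneg.
  - exact Hs.
  - specialize (Hstep 0%nat). simpl in Hstep. rewrite norm2_vsub_diag in Hstep. lra.
  - intro k. exact (Hstep (S k)).
Qed.

End Algorithm1.

Theorem lemma2p5
  (n : nat) (lam : R) (l u : vec) (f : vec -> R) (gradf : vec -> vec) (L : R)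
  (mu wbar : R) (w : nat -> R) (x y : nat -> vec)
  (Hlam : 0 < lam)
  (Hlu : forall i, (i < n)%nat -> l i <= u i)
  (Hconv : convex_on_Rn n f)
  (Hgrad : has_gradient n f gradf)
  (Hbdd : exists m, forall z, inX n l u z -> m <= f z)
  (HL : 0 < L)
  (HLip : lipschitz_on_X n l u gradf L)
  (Hmu : 0 < mu)
  (Hw : forall k, 0 <= w k <= wbar)
  (Hwbar : wbar < 1)
  (Halg : Alg1 n l u lam L mu gradf w x y) :
  (* (1) *)
  (forall k, Hval n lam f (x (S k)) <= Hval n lam f (x k)) /\
  (* (2) *)
  ((exists s, infinite_sum (fun j => norm2 n (vsub (x (S j)) (y (S j)))) s) /\
   Un_cv (fun j => norm n (vsub (x (S j)) (y (S j)))) 0) /\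
  (* (3) *)
  (exists k0, forall k, (k0 <= k)%nat ->
     forall i, (i < n)%nat -> (x k i = 0 <-> x k0 i = 0)) /\
  (* (4) *)
  ((exists s, infinite_sum (fun j => norm2 n (vsub (x (S j)) (x j))) s) /\
   Un_cv (fun j => norm n (vsub (x (S j)) (x j))) 0).
Proof.
  assert (Hgaps := gap_summable n lam l u f gradf L mu w x y
                     Hlam Hconv Hgrad Hbdd HL HLip Hmu Halg).
  assert (Hsteps := iterate_step_summable n lam l u f gradf L mu wbar w x y
                      Hlam Hconv Hgrad Hbdd HL HLip Hmu Hw Hwbar Halg).
  split; [|split; [|split]].
  - intro k. assert (0 <= norm2 n (vsub (x (S k)) (y (S k)))) by apply norm2_nonneg.
    assert (Hdec := sufficient_decrease n lam l u f gradf L mu w x y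
                      Hlam Hconv Hgrad HL HLip Halg k).
    nra.
  - split; [exact Hgaps|].
    destruct Hgaps as [s Hs].
    apply Un_cv_sqrt_0; [intro; apply norm2_nonneg | exact (infinite_sum_cv0 _ s Hs)].
  - destruct (zeros_persist_eventually n lam l u f gradf L mu w x y
                Hlam Hconv Hgrad Hbdd HL HLip Hmu Halg) as [K HK].
    exact (zeros_eventually_constant n x K HK).
  - split; [exact Hsteps|].
    destruct Hsteps as [s Hs].
    apply Un_cv_sqrt_0; [intro; apply norm2_nonneg | exact (infinite_sum_cv0 _ s Hs)].
Qed.
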